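(* Let $\kappa$ be an algebraically closed field of characteristic zero, complete for a non-trivial non-Archimedean absolute value. Let $a,b\in\kappa$ with $|a|=1$, let $L(z)=az+b$, let $f\in\mathcal{M}(\kappa)$ be a meromorphic function not identically zero, and let $m$ be a positive integer. Then for every $r>|b|$, $$m\!\left(r,\frac{f\circ L}{f}\right)=0,\qquad m\!\left(r,\frac{\Delta_L^mf}{f}\right)=0.$$
   Context: $\mathcal{M}(\kappa)$ is the field of meromorphic functions over $\kappa$ (quotients $g/h$ of power series converging on all of $\kappa$). For entire $g=\sum a_nz^n$, $\mu(r,g)=\max_n|a_n|r^n$; $\mu(r,g/h)=\mu(r,g)/\mu(r,h)$; $m(r,F)=\log^+\mu(r,F)$. $\Delta_Lf=f\circ L-f$, $\Delta_L^mf=\Delta_L(\Delta_L^{m-1}f)$. *)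

From HB Require Import structures.
From mathcomp Require Import all_boot all_order all_algebra.
From mathcomp Require Import all_classical all_reals all_analysis.
Set Implicit Arguments. Unset Strict Implicit. Unset Printing Implicit Defensive.
Import Order.TTheory GRing.Theory Num.Theory.
Local Open Scope classical_set_scope.
Local Open Scope ring_scope.

Record nonarch_abs (K : fieldType) (R : realType) := NonArchAbs {
  nabs : K -> R;
  nabs_ge0 : forall x, 0 <= nabs x;
  nabs_eq0 : forall x, nabs x = 0 <-> x = 0;
  nabsM : forall x y, nabs (x * y) = nabs x * nabs y;
  nabs_ultra : forall x y, nabs (x + y) <= Num.max (nabs x) (nabs y)
}.

Section Defs.
Context {K : fieldType} {R : realType} (v : nonarch_abs K R).
Local Notation "|. x .|" := (nabs v x).

Definition nontrivial_abs : Prop := exists x : K, |. x .| <> 0 /\ |. x .| <> 1.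

Definition kcvg (u : nat -> K) (l : K) : Prop :=
  forall e : R, 0 < e -> exists N, forall n, (N <= n)%N -> |. u n - l .| < e.

Definition kcauchy (u : nat -> K) : Prop :=
  forall e : R, 0 < e -> exists N, forall m n, (N <= m)%N -> (N <= n)%N ->
    |. u m - u n .| < e.

Definition complete_abs : Prop :=
  forall u : nat -> K, kcauchy u -> exists l, kcvg u l.

(** sum of a series in K (the limit of the partial sums; 0 if none) *)
Definition ksum (u : nat -> K) : K :=
  xget 0 [set l | kcvg (fun N => \sum_(j < N) u j) l].

(** power series sum_n a n z^n converging on all of K *)
Definition entire (a : nat -> K) : Prop :=
  forall z : K, forall e : R, 0 < e ->
    exists N, forall n, (N <= n)%N -> |. a n .| * |. z .| ^+ n < e.

Definition mu_ent (r : R) (a : nat -> K) : R :=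
  sup (range (fun n : nat => |. a n .| * r ^+ n)).

Definition ps_mul (a b : nat -> K) : nat -> K :=
  fun n => \sum_(i < n.+1) a i * b (n - i)%N.
Definition ps_sub (a b : nat -> K) : nat -> K := fun n => a n - b n.

(** coefficients of z |-> g(al z + be), for g = sum_k a k z^k:
    c_n = sum_{k >= n} a_k C(k,n) al^n be^(k-n) *)
Definition ps_comp_aff (al be : K) (a : nat -> K) : nat -> K :=
  fun n => ksum (fun j => a (n + j)%N * ('C(n + j, n))%:R * al ^+ n * be ^+ j).

(** meromorphic functions represented as quotients g/h of entire functions *)
Definition mero := ((nat -> K) * (nat -> K))%type.

Definition mero_sub (F G : mero) : mero :=
  (ps_sub (ps_mul F.1 G.2) (ps_mul G.1 F.2), ps_mul F.2 G.2).
Definition mero_div (F G : mero) : mero :=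
  (ps_mul F.1 G.2, ps_mul F.2 G.1).
Definition mero_comp_aff (al be : K) (F : mero) : mero :=
  (ps_comp_aff al be F.1, ps_comp_aff al be F.2).

Definition DeltaL (al be : K) (F : mero) : mero :=
  mero_sub (mero_comp_aff al be F) F.
Fixpoint DeltaLn (m : nat) (al be : K) (F : mero) : mero :=
  match m with 0%N => F | m'.+1 => DeltaL al be (DeltaLn m' al be F) end.

(** mu(r, g/h) = mu(r,g)/mu(r,h);  m(r,F) = log^+ mu(r,F) *)
Definition mu_mero (r : R) (F : mero) : R := mu_ent r F.1 / mu_ent r F.2.
Definition logp (x : R) : R := Num.max 0 (ln x).
Definition mprox (r : R) (F : mero) : R := logp (mu_mero r F).

End Defs.

(* For r > 0 the maximum term mu(r, .) behaves like an ultrametric absolute value on power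
   series whose terms |a_n| r^n tend to 0 (all entire series, once the absolute value is
   nontrivial).  It is multiplicative: at the sum of the largest indices where x and y attain
   their maximum terms, the Cauchy product is strictly dominated by the product of those two
   terms.  For |a| = 1 and |b| <= r it is invariant under g |-> g(az + b): every coefficient of
   the composite is dominated term by term, and at the largest maximising index of g the
   leading contribution dominates strictly.  Hence mu(r, f o L) = mu(r, f) and, by induction
   on m, mu(r, Delta_L^m f) <= mu(r, f), so both quotients have maximum term at most 1. *)

From HB Require Import structures.
From mathcomp Require Import all_boot all_order all_algebra.
From mathcomp Require Import all_classical all_reals all_analysis.
From mathcomp Require Import ring lra zify.
Import Order.TTheory GRing.Theory Num.Theory.
Local Open Scope ring_scope.
Set Implicit Arguments. Unset Strict Implicit. Unset Printing Implicit Defensive.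

Lemma bernoulli_ineq (R : realFieldType) (q : R) n : 1 <= q -> 1 + n%:R * (q - 1) <= q ^+ n.
Proof.
move=> q1; elim: n => [|n IH]; first by rewrite mul0r addr0 expr0.
have n0 : 0 <= n%:R * (q - 1) by rewrite mulr_ge0 ?ler0n // subr_ge0.
have : q * (1 + n%:R * (q - 1)) <= q * q ^+ n.
  by apply: ler_wpM2l => //; exact: le_trans ler01 q1.
rewrite exprS mulrS; nra.
Qed.

Lemma prefix_argmax d (T : orderType d) (f : nat -> T) n :
  exists2 k, (k <= n)%N & forall j, (j <= n)%N -> (f j <= f k)%O.
Proof.
case: (@arg_maxP _ T 'I_n.+1 ord0 xpredT (f \o val) isT) => k _ Hk.
by exists k => [|j hj]; [rewrite -ltnS | exact: (Hk (Ordinal (hj : (j < n.+1)%N)))].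
Qed.

Section NonArchAbs.
Variables (R : realType) (K : fieldType) (v : nonarch_abs K R).
Local Notation "|. x .|" := (nabs v x).

Lemma nabs0 : |.0.| = 0. Proof. exact/(nabs_eq0 v). Qed.

Lemma nabs_gt0 x : x != 0 -> 0 < |.x.|.
Proof.
rewrite lt_def nabs_ge0 andbT; apply: contra => /eqP.
by move/(nabs_eq0 v) ->.
Qed.

Lemma nabs1 : |.1.| = 1.
Proof.
have n1_gt0 : 0 < |.1.| by rewrite nabs_gt0 ?oner_neq0.
by apply: (mulfI (lt0r_neq0 n1_gt0)); rewrite -nabsM !mulr1.
Qed.

Lemma nabsN x : |.- x.| = |.x.|.
Proof.
have nabsN1 : |.-1.| = 1.
  have : |.-1.| * |.-1.| = 1 by rewrite -nabsM mulrNN mulr1 nabs1.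
  have := nabs_ge0 v (-1); nra.
by rewrite -mulN1r nabsM nabsN1 mul1r.
Qed.

Lemma nabsX x k : |.x ^+ k.| = |.x.| ^+ k.
Proof. by elim: k => [|k IH]; rewrite ?expr0 ?nabs1 // !exprS nabsM IH. Qed.

Lemma nabsB x y : |.x - y.| <= Num.max |.x.| |.y.|.
Proof. by rewrite -(nabsN y) nabs_ultra. Qed.

Lemma nabs_distC x y : |.x - y.| = |.y - x.|.
Proof. by rewrite -nabsN opprB. Qed.

Lemma nabs_natr_le1 k : |.k%:R.| <= 1.
Proof.
elim: k => [|k IH]; first by rewrite nabs0 ler01.
by rewrite mulrS; apply: le_trans (nabs_ultra _ _ _) _; rewrite ge_max nabs1 lexx.
Qed.

Lemma nabsD_dom x y : |.y.| < |.x.| -> |.x + y.| = |.x.|.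
Proof.
move=> yx; apply/eqP; rewrite eq_le; apply/andP; split.
  by apply: le_trans (nabs_ultra v x y) _; rewrite ge_max lexx ltW.
have := nabs_ultra v (x + y) (- y); rewrite addrK nabsN le_max => /orP [//|xy].
by have := lt_le_trans yx xy; rewrite ltxx.
Qed.

Lemma nabs_sum_le (I : Type) (s : seq I) (P : pred I) (F : I -> K) (c : R) :
  0 <= c -> (forall i, P i -> |.F i.| <= c) -> |.\sum_(i <- s | P i) F i.| <= c.
Proof.
move=> c0 H; apply: (big_ind (fun x => |.x.| <= c)) => //; first by rewrite nabs0.
by move=> x y hx hy; apply: le_trans (nabs_ultra _ _ _) _; rewrite ge_max hx hy.
Qed.

Lemma nabs_sum_lt (I : Type) (s : seq I) (P : pred I) (F : I -> K) (c : R) :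
  0 < c -> (forall i, P i -> |.F i.| < c) -> |.\sum_(i <- s | P i) F i.| < c.
Proof.
move=> c0 H; apply: (big_ind (fun x => |.x.| < c)) => //; first by rewrite nabs0.
by move=> x y hx hy; apply: le_lt_trans (nabs_ultra _ _ _) _; rewrite gt_max hx hy.
Qed.

Lemma nabs_sum_mulr_le (I : Type) (s : seq I) (P : pred I) (F : I -> K) (c z : R) :
  0 < z -> 0 <= c -> (forall i, P i -> |.F i.| * z <= c) ->
  |.\sum_(i <- s | P i) F i.| * z <= c.
Proof.
move=> z0 c0 H; rewrite -ler_pdivlMr //; apply: nabs_sum_le => [|i /H].
  by rewrite divr_ge0 // ltW.
by rewrite ler_pdivlMr.
Qed.

Lemma nabs_sum_mulr_lt (I : Type) (s : seq I) (P : pred I) (F : I -> K) (c z : R) :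
  0 < z -> 0 < c -> (forall i, P i -> |.F i.| * z < c) ->
  |.\sum_(i <- s | P i) F i.| * z < c.
Proof.
move=> z0 c0 H; rewrite -ltr_pdivlMr //; apply: nabs_sum_lt => [|i /H].
  by rewrite divr_gt0.
by rewrite ltr_pdivlMr.
Qed.

Lemma nontrivial_abs_gt1 : nontrivial_abs v -> exists y, 1 < |.y.|.
Proof.
move=> [x [nx0 nx1]].
have x0 : x != 0 by apply: contra_notN nx0 => /eqP ->; rewrite nabs0.
have nxV : |.x^-1.| = |.x.|^-1.
  by apply: (mulfI (lt0r_neq0 (nabs_gt0 x0))); rewrite -nabsM !mulfV ?nabs1 ?lt0r_neq0 ?nabs_gt0.
case: (ltrgtP |.x.| 1) => [x_lt1|x_gt1|//]; last by exists x.
by exists x^-1; rewrite nxV invf_gt1 ?nabs_gt0.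
Qed.

Lemma kcvg_ksum (t : nat -> K) : complete_abs v ->
  (forall e, 0 < e -> exists J, forall j, (J <= j)%N -> |.t j.| < e) ->
  kcvg v (fun n => \sum_(j < n) t j) (ksum v t).
Proof.
move=> hc t_to0; rewrite /ksum; case: xgetP => [//| no_lim].
suff /hc [l Hl] : kcauchy v (fun n => \sum_(j < n) t j) by case: (no_lim l).
move=> e e0; have [J HJ] := t_to0 e e0; exists J.
have tail : forall m n, (J <= m)%N -> (m <= n)%N ->
    |.\sum_(j < m) t j - \sum_(j < n) t j.| < e.
  move=> m n hm hmn.
  rewrite -!(big_mkord xpredT) (big_cat_nat (leq0n m) hmn) /=.
  rewrite opprD addrA subrr add0r nabsN big_seq; apply: nabs_sum_lt => // j.
  by rewrite mem_index_iota => /andP [hj _]; apply: HJ; exact: leq_trans hm hj.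
move=> m n hm hn; case: (leqP m n) => hmn; first exact: tail.
by rewrite nabs_distC; apply: tail => //; apply: ltnW.
Qed.

Lemma kcvg_nabs_le (S : nat -> K) l M :
  kcvg v S l -> (forall n, |.S n.| <= M) -> |.l.| <= M.
Proof.
move=> Sl SM; rewrite leNgt; apply/negP => lM.
have e0 : 0 < |.l.| - M by rewrite subr_gt0.
have [J HJ] := Sl _ e0; have := HJ J (leqnn J); have := SM J; have := nabs_ge0 v (S J).
have := nabs_ultra v (S J) (l - S J); rewrite addrCA subrr addr0 le_max.
case/orP => [|]; last rewrite nabs_distC; lra.
Qed.

Lemma kcvg_nabs_ge (S : nat -> K) l c J0 : kcvg v S l -> 0 < c ->
  (forall n, (J0 <= n)%N -> c <= |.S n.|) -> c <= |.l.|.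
Proof.
move=> Sl c0 cS; have [J1 HJ1] := Sl _ c0; set n := maxn J0 J1.
have cSn := cS n (leq_maxl _ _).
have lS : |.l - S n.| < |.S n.|.
  by rewrite nabs_distC (lt_le_trans (HJ1 n (leq_maxr _ _))).
by rewrite -(subrK (S n) l) addrC (nabsD_dom lS).
Qed.

End NonArchAbs.

Section MaxTerm.
Variables (R : realType) (K : fieldType) (v : nonarch_abs K R) (r : R).
Hypothesis r_gt0 : 0 < r.
Local Notation "|. x .|" := (nabs v x).
Local Notation mu := (mu_ent v r).

Definition mterm (a : nat -> K) n := |.a n.| * r ^+ n.

Definition mterm_vanish (a : nat -> K) :=
  forall e, 0 < e -> exists M, forall n, (M <= n)%N -> mterm a n < e.

Definition central_index (a : nat -> K) M :=
  mterm a M = mu a /\ forall k, (M < k)%N -> mterm a k < mu a.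

Lemma mterm_ge0 a n : 0 <= mterm a n.
Proof. by rewrite mulr_ge0 ?nabs_ge0 ?exprn_ge0 ?ltW. Qed.

Lemma mterm_vanish_bounded a : mterm_vanish a -> exists B, forall n, mterm a n <= B.
Proof.
move=> /(_ 1 ltr01) [M HM]; have [k _ Hk] := prefix_argmax (mterm a) M.
exists (Num.max 1 (mterm a k)) => n; rewrite le_max.
by case: (leqP M n) => [/HM/ltW -> | /ltnW/Hk ->]; rewrite ?orbT.
Qed.

Lemma mu_ent_ub a n : mterm_vanish a -> mterm a n <= mu a.
Proof.
move=> /mterm_vanish_bounded [B HB]; apply: sup_upper_bound; last by exists n.
by split; [exists (mterm a 0), 0%N | exists B => _ [k _ <-]; apply: HB].
Qed.

Lemma mu_ent_ge0 a : mterm_vanish a -> 0 <= mu a.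
Proof. by move=> av; apply: le_trans (mu_ent_ub 0 av); apply: mterm_ge0. Qed.

Lemma mu_ent_le a M : (forall n, mterm a n <= M) -> mu a <= M.
Proof.
move=> aM; apply: ge_sup; first by exists (mterm a 0), 0%N.
by move=> _ [k _ <-]; apply: aM.
Qed.

Lemma mu_ent_attained a : mterm_vanish a -> 0 < mu a -> exists k, mterm a k = mu a.
Proof.
move=> av mu_gt0.
have [k0 k0_gt0] : exists k, 0 < mterm a k.
  apply: contrapT => none; suff : mu a <= 0 by rewrite leNgt mu_gt0.
  by apply: mu_ent_le => n; rewrite leNgt; apply/negP => pos; apply: none; exists n.
have [M HM] := av _ k0_gt0; have [k _ Hk] := prefix_argmax (mterm a) M.
have k0M : (k0 <= M)%N by rewrite leqNgt; apply/negP => /ltnW/HM; rewrite ltxx.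
have ub n : mterm a n <= mterm a k.
  case: (leqP n M) => [/Hk //| /ltnW/HM/ltW hn]; exact: le_trans hn (Hk _ k0M).
by exists k; apply/eqP; rewrite eq_le mu_ent_ub // mu_ent_le.
Qed.

Lemma exists_central_index a : mterm_vanish a -> 0 < mu a -> exists M, central_index a M.
Proof.
move=> av mu_gt0; have [N1 HN1] := av _ mu_gt0.
have attained : exists k, mterm a k == mu a.
  by have [k ?] := mu_ent_attained av mu_gt0; exists k; apply/eqP.
have bounded k : mterm a k == mu a -> (k <= N1)%N.
  by move=> /eqP hk; rewrite leqNgt; apply/negP => /ltnW/HN1; rewrite hk ltxx.
case: (ex_maxnP attained bounded) => M /eqP HM maxM.
exists M; split => // k Mk; rewrite lt_neqAle mu_ent_ub // andbT.
by apply: contraTN Mk => /maxM; rewrite -leqNgt.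
Qed.

Lemma mterm_prod_term x y i n : (i <= n)%N ->
  |.x i * y (n - i)%N.| * r ^+ n = mterm x i * mterm y (n - i).
Proof.
move=> hi; have -> : r ^+ n = r ^+ i * r ^+ (n - i) by rewrite -exprD subnKC.
rewrite /mterm nabsM; ring.
Qed.

Lemma mterm_vanish_mul x y : mterm_vanish x -> mterm_vanish y -> mterm_vanish (ps_mul x y).
Proof.
move=> xv yv e e0.
have [Bx HBx] := mterm_vanish_bounded xv; have [By HBy] := mterm_vanish_bounded yv.
have Bx0 := le_trans (mterm_ge0 x 0) (HBx 0%N).
have By0 := le_trans (mterm_ge0 y 0) (HBy 0%N).
set B := Bx + By + 1; have B_gt0 : 0 < B by rewrite /B; lra.
have [Nx HNx] := xv _ (divr_gt0 e0 B_gt0); have [Ny HNy] := yv _ (divr_gt0 e0 B_gt0).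
exists (Nx + Ny)%N => n hn; rewrite /mterm /ps_mul.
apply: nabs_sum_mulr_lt => // [|i _]; first by rewrite exprn_gt0.
have hi : (i <= n)%N by rewrite -ltnS.
rewrite mterm_prod_term //; case: (leqP Nx i) => hxi.
  apply: (@le_lt_trans _ _ (mterm x i * B)).
    by apply: ler_wpM2l; [exact: mterm_ge0 | apply: le_trans (HBy _) _; rewrite /B; lra].
  by rewrite -ltr_pdivlMr // HNx.
apply: (@le_lt_trans _ _ (B * mterm y (n - i))).
  by apply: ler_wpM2r; [exact: mterm_ge0 | apply: le_trans (HBx _) _; rewrite /B; lra].
by rewrite mulrC -ltr_pdivlMr // HNy //; lia.
Qed.

Lemma mu_ent_mul_le x y : mterm_vanish x -> mterm_vanish y -> mu (ps_mul x y) <= mu x * mu y.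
Proof.
move=> xv yv; apply: mu_ent_le => n; rewrite /mterm /ps_mul.
apply: nabs_sum_mulr_le => [||i _]; first exact: exprn_gt0.
  by rewrite mulr_ge0 ?mu_ent_ge0.
rewrite mterm_prod_term; last by rewrite -ltnS.
by apply: ler_pM; rewrite ?mterm_ge0 ?mu_ent_ub.
Qed.

(* Every summand of the Cauchy product at [Nx + Ny] other than [x Nx * y Ny] has a factor
   beyond a central index, so [x Nx * y Ny] dominates strictly. *)
Lemma mterm_mul_central x y Nx Ny :
  mterm_vanish x -> mterm_vanish y -> 0 < mu x -> 0 < mu y ->
  central_index x Nx -> central_index y Ny ->
  mterm (ps_mul x y) (Nx + Ny) = mu x * mu y.
Proof.
move=> xv yv mx_gt0 my_gt0 [eNx HNx] [eNy HNy].
have Nx_lt : (Nx < (Nx + Ny).+1)%N by rewrite ltnS leq_addr.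
have rn_gt0 : 0 < r ^+ (Nx + Ny) by rewrite exprn_gt0.
have central : |.x Nx * y Ny.| * r ^+ (Nx + Ny) = mu x * mu y.
  by rewrite -{1}(addKn Nx Ny) mterm_prod_term ?leq_addr // addKn eNx eNy.
have off i : (i <= Nx + Ny)%N -> i != Nx ->
    mterm x i * mterm y (Nx + Ny - i) < mu x * mu y.
  move=> hi; case: (ltngtP i Nx) => [i_lt _ | i_gt _ | //].
    apply: (@le_lt_trans _ _ (mu x * mterm y (Nx + Ny - i))).
      by apply: ler_wpM2r; [exact: mterm_ge0 | exact: mu_ent_ub].
    by rewrite ltr_pM2l // HNy //; lia.
  apply: (@le_lt_trans _ _ (mterm x i * mu y)).
    by apply: ler_wpM2l; [exact: mterm_ge0 | exact: mu_ent_ub].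
  by rewrite ltr_pM2r // HNx.
rewrite /mterm /ps_mul (bigD1 (Ordinal Nx_lt)) //= addKn nabsD_dom // -(ltr_pM2r rn_gt0).
rewrite central; apply: nabs_sum_mulr_lt => // [|i ne]; first exact: mulr_gt0.
have hi : (i <= Nx + Ny)%N by rewrite -ltnS.
by rewrite mterm_prod_term // off.
Qed.

Lemma mu_ent_mul_ge x y : mterm_vanish x -> mterm_vanish y -> mu x * mu y <= mu (ps_mul x y).
Proof.
move=> xv yv; have xyv := mterm_vanish_mul xv yv.
have := mu_ent_ge0 xv; rewrite le_eqVlt => /orP [/eqP <-|mx_gt0].
  by rewrite mul0r mu_ent_ge0.
have := mu_ent_ge0 yv; rewrite le_eqVlt => /orP [/eqP <-|my_gt0].
  by rewrite mulr0 mu_ent_ge0.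
have [Nx cx] := exists_central_index xv mx_gt0.
have [Ny cy] := exists_central_index yv my_gt0.
by rewrite -(mterm_mul_central xv yv mx_gt0 my_gt0 cx cy) mu_ent_ub.
Qed.

Lemma mu_ent_mul x y : mterm_vanish x -> mterm_vanish y -> mu (ps_mul x y) = mu x * mu y.
Proof. by move=> xv yv; apply/eqP; rewrite eq_le mu_ent_mul_le ?mu_ent_mul_ge. Qed.

Lemma mterm_vanish_sub x y : mterm_vanish x -> mterm_vanish y -> mterm_vanish (ps_sub x y).
Proof.
move=> xv yv e e0; have [Mx HMx] := xv e e0; have [My HMy] := yv e e0.
exists (Mx + My)%N => n hn; rewrite /mterm /ps_sub.
have rn0 : 0 <= r ^+ n by rewrite exprn_ge0 // ltW.
apply: le_lt_trans (_ : Num.max |.x n.| |.y n.| * r ^+ n < e).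
  by apply: ler_wpM2r => //; apply: nabsB.
rewrite maxr_pMl // gt_max HMx ?HMy //.
  exact: leq_trans (leq_addl _ _) hn.
exact: leq_trans (leq_addr _ _) hn.
Qed.

Lemma mu_ent_sub_le x y : mterm_vanish x -> mterm_vanish y ->
  mu (ps_sub x y) <= Num.max (mu x) (mu y).
Proof.
move=> xv yv; apply: mu_ent_le => n; rewrite /mterm /ps_sub.
have rn0 : 0 <= r ^+ n by rewrite exprn_ge0 // ltW.
apply: le_trans (_ : Num.max |.x n.| |.y n.| * r ^+ n <= _).
  by apply: ler_wpM2r => //; apply: nabsB.
by rewrite maxr_pMl // ge_max !le_max (mu_ent_ub _ xv) (mu_ent_ub _ yv) orbT.
Qed.

End MaxTerm.

Section CompAff.
Variables (R : realType) (K : fieldType) (v : nonarch_abs K R) (r : R).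
Hypotheses (r_gt0 : 0 < r) (v_complete : complete_abs v).
Variables (al be : K).
Hypotheses (al1 : nabs v al = 1) (be_le : nabs v be <= r).
Local Notation "|. x .|" := (nabs v x).
Local Notation mu := (mu_ent v r).
Local Notation mterm := (mterm v r).
Local Notation mterm_vanish := (mterm_vanish v r).

Definition comp_aff_coef (u : nat -> K) n j :=
  u (n + j)%N * ('C(n + j, n))%:R * al ^+ n * be ^+ j.

Lemma mterm_comp_aff_coef u n j : |.comp_aff_coef u n j.| * r ^+ n <= mterm u (n + j).
Proof.
rewrite /comp_aff_coef /mterm !nabsM !nabsX al1 expr1n mulr1 exprD mulrAC -!mulrA.
apply: ler_wpM2l; first exact: nabs_ge0.
rewrite mulrCA; apply: ler_wpM2l; first by rewrite exprn_ge0 // ltW.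
rewrite -[X in _ <= X]mul1r; apply: ler_pM.
- exact: nabs_ge0.
- by rewrite exprn_ge0 ?nabs_ge0.
- exact: nabs_natr_le1.
- by apply: lerXn2r; rewrite ?nnegrE ?nabs_ge0 // ltW.
Qed.

Lemma kcvg_comp_aff u n : mterm_vanish u ->
  kcvg v (fun J => \sum_(j < J) comp_aff_coef u n j) (ps_comp_aff v al be u n).
Proof.
move=> uv; have rn_gt0 : 0 < r ^+ n by rewrite exprn_gt0.
apply: kcvg_ksum v_complete _ => e e0.
have [M HM] := uv _ (mulr_gt0 e0 rn_gt0); exists M => j hj.
rewrite -(ltr_pM2r rn_gt0); apply: le_lt_trans (mterm_comp_aff_coef u n j) _.
by apply: HM; exact: leq_trans hj (leq_addl _ _).
Qed.

Lemma mterm_comp_aff_le u n M : mterm_vanish u ->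
  (forall k, (n <= k)%N -> mterm u k <= M) -> mterm (ps_comp_aff v al be u) n <= M.
Proof.
move=> uv uM; have rn_gt0 : 0 < r ^+ n by rewrite exprn_gt0.
have M0 : 0 <= M by apply: le_trans (uM n (leqnn n)); apply: mterm_ge0.
rewrite /mterm -ler_pdivlMr //; apply: kcvg_nabs_le (kcvg_comp_aff n uv) _ => J.
apply: nabs_sum_le => [|j _]; first by rewrite divr_ge0 // ltW.
rewrite ler_pdivlMr //; apply: le_trans (mterm_comp_aff_coef u n j) (uM _ (leq_addr _ _)).
Qed.

Lemma mterm_vanish_comp_aff u : mterm_vanish u -> mterm_vanish (ps_comp_aff v al be u).
Proof.
move=> uv e e0; have [M HM] := uv _ (divr_gt0 e0 (ltr0n _ 2)); exists M => n hn.
apply: le_lt_trans (_ : e / 2 < e); last by lra.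
apply: mterm_comp_aff_le => // k hk; apply/ltW/HM; exact: leq_trans hn hk.
Qed.

Lemma mu_ent_comp_aff_le u : mterm_vanish u -> mu (ps_comp_aff v al be u) <= mu u.
Proof.
by move=> uv; apply: mu_ent_le => n; apply: mterm_comp_aff_le => // k _; apply: mu_ent_ub.
Qed.

(* At a central index [M] of [u] the leading contribution [u M] strictly dominates the
   other terms of the series defining the [M]-th coefficient of [u \o L]. *)
Lemma mu_ent_comp_aff_ge u : mterm_vanish u -> mu u <= mu (ps_comp_aff v al be u).
Proof.
move=> uv; have cuv := mterm_vanish_comp_aff uv.
have := mu_ent_ge0 r_gt0 uv; rewrite le_eqVlt => /orP [/eqP <-|mu_gt0].
  exact: mu_ent_ge0.
have [M [eM HM]] := exists_central_index uv mu_gt0.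
have rM_gt0 : 0 < r ^+ M by rewrite exprn_gt0.
apply: le_trans (mu_ent_ub M cuv); rewrite -eM /mterm; apply: ler_wpM2r; first exact: ltW.
have uM_gt0 : 0 < |.u M.| by move: mu_gt0; rewrite -eM /mterm pmulr_lgt0.
have lead : |.comp_aff_coef u M 0.| = |.u M.|.
  by rewrite /comp_aff_coef addn0 binn mulr1n expr0 !mulr1 nabsM nabsX al1 expr1n mulr1.
have rest j : (0 < j)%N -> |.comp_aff_coef u M j.| < |.u M.|.
  move=> j_gt0; rewrite -(ltr_pM2r rM_gt0).
  apply: le_lt_trans (mterm_comp_aff_coef u M j) _.
  by apply: lt_le_trans (HM (M + j)%N _) _; [lia | rewrite -eM].
apply: (kcvg_nabs_ge (J0 := 1%N) (kcvg_comp_aff M uv) uM_gt0) => -[//|J] _.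
rewrite big_ord_recl nabsD_dom lead //.
by apply: nabs_sum_lt => // i _; apply: rest; rewrite lift0.
Qed.

Lemma mu_ent_comp_aff u : mterm_vanish u -> mu (ps_comp_aff v al be u) = mu u.
Proof. by move=> uv; apply/eqP; rewrite eq_le mu_ent_comp_aff_le ?mu_ent_comp_aff_ge. Qed.

End CompAff.


Lemma mterm_vanish_entire (R : realType) (K : fieldType) (v : nonarch_abs K R) (r : R) a :
  nontrivial_abs v -> 0 <= r -> entire v a -> mterm_vanish v r a.
Proof.
move=> /nontrivial_abs_gt1 [y y_gt1] r0 av.
have q_gt0 : 0 < nabs v y - 1 by rewrite subr_gt0.
have n_ge : 0 <= r / (nabs v y - 1) by rewrite divr_ge0 // ltW.
set n := Num.bound (r / (nabs v y - 1)); have := archi_boundP n_ge.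
rewrite -/n ltr_pdivrMr // => rn.
have r_le : r <= nabs v (y ^+ n).
  rewrite nabsX; apply: le_trans (bernoulli_ineq n (ltW y_gt1)); nra.
move=> e e0; have [M HM] := av (y ^+ n) e e0; exists M => k /HM; apply: le_lt_trans.
apply: ler_wpM2l; first exact: nabs_ge0.
by apply: lerXn2r; rewrite ?nnegrE ?nabs_ge0.
Qed.

Lemma logp_div_eq0 (R : realType) (x y : R) : 0 <= y -> x <= y -> logp (x / y) = 0.
Proof.
move=> y0 xy; apply/eqP; rewrite /logp eq_le ge_max lexx le_max lexx /= andbT.
have [->|y_neq0] := eqVneq y 0; first by rewrite invr0 mulr0 ln0.
by apply: ln_le0; rewrite ler_pdivrMr ?mul1r // lt_def y_neq0.
Qed.

Section Difference.
Variables (R : realType) (K : fieldType) (v : nonarch_abs K R) (r : R).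
Hypotheses (r_gt0 : 0 < r) (v_complete : complete_abs v).
Variables (al be : K).
Hypotheses (al1 : nabs v al = 1) (be_le : nabs v be <= r).
Variables (g h : nat -> K).
Hypotheses (gv : mterm_vanish v r g) (hv : mterm_vanish v r h).
Local Notation mu := (mu_ent v r).
Local Notation mterm_vanish := (mterm_vanish v r).
Local Notation comp := (ps_comp_aff v al be).

Lemma mterm_vanish_DeltaLn m :
  mterm_vanish (DeltaLn v m al be (g, h)).1 /\ mterm_vanish (DeltaLn v m al be (g, h)).2.
Proof.
elim: m => [//|m] /=; case: (DeltaLn v m al be (g, h)) => P Q /= [Pv Qv].
have cPv := mterm_vanish_comp_aff r_gt0 v_complete al1 be_le Pv.
have cQv := mterm_vanish_comp_aff r_gt0 v_complete al1 be_le Qv.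
by split; [apply: mterm_vanish_sub => //; apply: mterm_vanish_mul | apply: mterm_vanish_mul].
Qed.

Lemma mu_DeltaL_le P Q : mterm_vanish P -> mterm_vanish Q ->
  mu (DeltaL v al be (P, Q)).1 <= mu P * mu Q /\ mu (DeltaL v al be (P, Q)).2 = mu Q * mu Q.
Proof.
move=> Pv Qv; rewrite /DeltaL /mero_sub /mero_comp_aff /=.
have cPv := mterm_vanish_comp_aff r_gt0 v_complete al1 be_le Pv.
have cQv := mterm_vanish_comp_aff r_gt0 v_complete al1 be_le Qv.
have mu_comp u (uv : mterm_vanish u) : mu (comp u) = mu u :=
  mu_ent_comp_aff r_gt0 v_complete al1 be_le uv.
split; last by rewrite (mu_ent_mul r_gt0) // mu_comp.
apply: le_trans (mu_ent_sub_le r_gt0 _ _) _; try exact: mterm_vanish_mul.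
by rewrite !(mu_ent_mul r_gt0) // !mu_comp // maxxx.
Qed.

Lemma mu_DeltaLn_le m :
  mu (DeltaLn v m al be (g, h)).1 * mu h <= mu g * mu (DeltaLn v m al be (g, h)).2.
Proof.
elim: m => [|m IH] /=; first by rewrite mulrC.
move: IH (mterm_vanish_DeltaLn m); case: (DeltaLn v m al be (g, h)) => P Q /= IH [Pv Qv].
have [num den] := mu_DeltaL_le Pv Qv; rewrite den.
have := mu_ent_ge0 r_gt0 Qv; have := mu_ent_ge0 r_gt0 hv; nra.
Qed.

End Difference.

Theorem corollary2p4 (R : realType) (K : closedFieldType) (v : nonarch_abs K R)
  (hchar : [pchar K] =i pred0)
  (hcomplete : complete_abs v) (hnontriv : nontrivial_abs v)
  (a b : K) (ha : nabs v a = 1)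
  (g h : nat -> K) (hg : entire v g) (hh : entire v h)
  (hh0 : exists n, h n != 0) (hg0 : exists n, g n != 0)
  (m : nat) (hm : (0 < m)%N) (r : R) (hr : nabs v b < r) :
  mprox v r (mero_div (mero_comp_aff v a b (g, h)) (g, h)) = 0 /\
  mprox v r (mero_div (DeltaLn v m a b (g, h)) (g, h)) = 0.
Proof.
have r_gt0 : 0 < r := le_lt_trans (nabs_ge0 v b) hr.
have gv := mterm_vanish_entire hnontriv (ltW r_gt0) hg.
have hv := mterm_vanish_entire hnontriv (ltW r_gt0) hh.
have cgv := mterm_vanish_comp_aff r_gt0 hcomplete ha (ltW hr) gv.
have chv := mterm_vanish_comp_aff r_gt0 hcomplete ha (ltW hr) hv.
have mu_comp u := @mu_ent_comp_aff _ _ v r r_gt0 hcomplete a b ha (ltW hr) u.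
rewrite /mprox /mu_mero /=; split.
  rewrite !(mu_ent_mul r_gt0) // !mu_comp // [mu_ent v r h * _]mulrC.
  by rewrite logp_div_eq0 ?mulr_ge0 ?mu_ent_ge0.
have [Pv Qv] := mterm_vanish_DeltaLn r_gt0 hcomplete ha (ltW hr) gv hv m.
have := mu_DeltaLn_le r_gt0 hcomplete ha (ltW hr) gv hv m.
rewrite !(mu_ent_mul r_gt0) // [mu_ent v r _ * mu_ent v r g]mulrC => le_cross.
by rewrite logp_div_eq0 ?mulr_ge0 ?mu_ent_ge0.
Qed.
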